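(* For each positive integer $n$, let $\Gamma_n$ be the set of non-negative integers that can be expressed as a finite sum of squares of integers greater than or equal to $n$ (the empty sum being $0$), and let $F(\Gamma_n)$ denote the greatest integer not belonging to $\Gamma_n$. Then $F(\Gamma_n)=O(n^2)$; that is, there is a constant $C>0$ such that $F(\Gamma_n)\le C n^2$ for all positive integers $n$.
   Context: For every positive integer $n$ the set $\mathbb{N}\setminus\Gamma_n$ of non-negative integers not in $\Gamma_n$ is finite (since $\gcd(n^2,(n+1)^2)=1$), so $F(\Gamma_n)$ is well defined. *)

From mathcomp Require Import all_boot all_order all_algebra.
Set Implicit Arguments. Unset Strict Implicit. Unset Printing Implicit Defensive.
Import Order.TTheory GRing.Theory Num.Theory.

Definition in_Gamma (n : nat) (m : int) : Prop :=
  exists s : seq int,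
    all (fun k => (n%:Z <= k)%R) s /\ m = (\sum_(k <- s) k ^+ 2)%R.

Definition is_frobenius (n : nat) (f : int) : Prop :=
  ~ in_Gamma n f /\ forall m : int, ~ in_Gamma n m -> (m <= f)%R.

(* Lagrange's four-square theorem, proved by Euler's identity and Fermat's
   descent, does all the work.  Write N = n.  Since
   (2N + x)^2 + (2N - x)^2 = 8N^2 + 2x^2 and both bases lie in [N, 3N] when
   x^2 <= N^2, every 32N^2 + 2r with 0 <= r <= N^2 lies in Gamma_n (split r
   into four squares); adding multiples of N^2 gives all 32N^2 + 2u, u >= 0.
   One of N^2, (N + 1)^2 has the parity of m, so every m >= 36N^2 lies in
   Gamma_n and F(Gamma_n) < 36 n^2. *)

From mathcomp Require Import all_boot all_order all_algebra zify ring.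
From Stdlib Require Import Classical.
Import Order.TTheory GRing.Theory Num.Theory.
Set Implicit Arguments. Unset Strict Implicit. Unset Printing Implicit Defensive.

Lemma sqr_modn_inj p x y : prime p -> (2 * x < p)%N -> (2 * y < p)%N ->
  (x ^ 2 = y ^ 2 %[mod p])%N -> x = y.
Proof.
move=> p_pr; wlog le_xy : x y / (x <= y)%N.
  move=> W hx hy e; case: (leqP x y) => [|/ltnW] le; first exact: W.
  by apply/esym/W.
move=> hx hy /esym/eqP; rewrite eqn_mod_dvd ?leq_exp2r //.
rewrite subn_sqr Euclid_dvdM //.
case/orP=> dv.
  by case: (posnP (y - x)) => [|pos]; [lia | have := dvdn_leq pos dv; lia].
by case: (posnP (y + x)) => [|pos]; [lia | have := dvdn_leq pos dv; lia].
Qed.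

Lemma exists_small_sqrD1_dvd p : prime p -> odd p ->
  exists x y, [/\ 2 * x < p, 2 * y < p & p %| x ^ 2 + y ^ 2 + 1]%N.
Proof.
move=> p_pr p_odd; have p_gt0 := prime_gt0 p_pr.
set h := p.+1./2; have h2 : (h.*2 = p.+1)%N.
  by rewrite /h; have := odd_double_half p.+1; rewrite /= p_odd /=; lia.
have small x : x \in iota 0 h -> (2 * x < p)%N by rewrite mem_iota; lia.
pose sx := [seq x ^ 2 %% p | x <- iota 0 h].
pose sy := [seq p.-1 - y ^ 2 %% p | y <- iota 0 h].
have sx_uniq : uniq sx.
  rewrite map_inj_in_uniq ?iota_uniq // => x y hx hy.
  exact: sqr_modn_inj p_pr (small _ hx) (small _ hy).
have sy_uniq : uniq sy.
  rewrite map_inj_in_uniq ?iota_uniq // => x y hx hy e.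
  apply: sqr_modn_inj p_pr (small _ hx) (small _ hy) _.
  by move: e (ltn_pmod (x ^ 2) p_gt0) (ltn_pmod (y ^ 2) p_gt0); lia.
(* Pigeonhole: sx and sy have (p + 1)/2 distinct entries each in [0, p). *)
have : ~~ uniq (sx ++ sy).
  apply: contraTN isT => s_uniq.
  have : {subset sx ++ sy <= iota 0 p}.
    by move=> z; rewrite mem_cat mem_iota => /orP [] /mapP [x _ ->];
      [rewrite ltn_pmod | lia].
  move/(uniq_leq_size s_uniq); rewrite size_cat !size_map !size_iota; lia.
rewrite cat_uniq sx_uniq sy_uniq andbT /= negbK.
case/hasP=> _ /mapP [y hy ->] /mapP [x hx exy].
exists x, y; split; [exact: small | exact: small |].
apply/dvdnP; exists (x ^ 2 %/ p + y ^ 2 %/ p + 1)%N.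
by move: exy (ltn_pmod (y ^ 2) p_gt0) (divn_eq (x ^ 2) p) (divn_eq (y ^ 2) p); lia.
Qed.

Local Open Scope ring_scope.

Definition sum4sq (x : int) : Prop :=
  exists a b c d : int, x = a ^+ 2 + b ^+ 2 + c ^+ 2 + d ^+ 2.

Lemma sum4sqM x y : sum4sq x -> sum4sq y -> sum4sq (x * y).
Proof.
move=> [a [b [c [d ->]]]] [e [f [g [h ->]]]].
exists (a * e + b * f + c * g + d * h), (a * f - b * e + c * h - d * g),
       (a * g - b * h - c * e + d * f), (a * h + b * g - c * f - d * e).
ring.
Qed.

Lemma sum4sq_halve x a b c d :
  2 * x = a ^+ 2 + b ^+ 2 + c ^+ 2 + d ^+ 2 -> sum4sq x.
Proof.
have halve_paired a' b' c' d' : (2 %| a' - b')%Z ->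
    2 * x = a' ^+ 2 + b' ^+ 2 + c' ^+ 2 + d' ^+ 2 -> sum4sq x.
  move=> /dvdzP [k ek] ex.
  have /dvdzP [l el] : (2 %| c' - d')%Z by move: ex; rewrite !expr2; nia.
  exists (b' + k), k, (d' + l), l.
  have ea : a' = b' + k * 2 by rewrite -ek; ring.
  have ec : c' = d' + l * 2 by rewrite -el; ring.
  by apply: (@mulfI _ 2) => //; rewrite ex ea ec; ring.
have [ab|nab] := boolP (2 %| a - b)%Z; first exact: halve_paired.
have [ac|nac] := boolP (2 %| a - c)%Z.
  by move=> ex; apply: (halve_paired a c b d) => //; rewrite ex; ring.
have bc : (2 %| b - c)%Z by lia.
by move=> ex; apply: (halve_paired b c a d) => //; rewrite ex; ring.
Qed.

Lemma divz_centered (j : nat) (a : int) : exists y k : int,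
  a = y + (2 * j + 1)%:Z * k /\ - j%:Z <= y <= j%:Z.
Proof.
set m := (2 * j + 1)%:Z; have m_gt0 : 0 < m by rewrite /m; lia.
have ea := divz_eq a m; have := modz_ge0 a (lt0r_neq0 m_gt0).
have := ltz_pmod a m_gt0; rewrite /m in ea *.
case: (lerP (a %% m)%Z j%:Z) => hj lt ge.
  by exists (a %% m)%Z, (a %/ m)%Z; split; [rewrite {1}ea; ring | lia].
by exists ((a %% m)%Z - m), ((a %/ m)%Z + 1); split; [rewrite {1}ea; ring | lia].
Qed.

Lemma sum4sq_reduce (m p r y1 y2 y3 y4 k1 k2 k3 k4 : int) : m != 0 ->
  m * p = (y1 + m * k1) ^+ 2 + (y2 + m * k2) ^+ 2 + (y3 + m * k3) ^+ 2
          + (y4 + m * k4) ^+ 2 ->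
  m * r = y1 ^+ 2 + y2 ^+ 2 + y3 ^+ 2 + y4 ^+ 2 ->
  sum4sq (r * p).
Proof.
(* Euler's identity for (y_i + m k_i)_i and (y_i)_i: all four terms are divisible by m. *)
move=> m0 Hp Hr.
pose s := k1 * y1 + k2 * y2 + k3 * y3 + k4 * y4.
pose z2 := k1 * y2 - k2 * y1 + k3 * y4 - k4 * y3.
pose z3 := k1 * y3 - k2 * y4 - k3 * y1 + k4 * y2.
pose z4 := k1 * y4 + k2 * y3 - k3 * y2 - k4 * y1.
exists (r + s), z2, z3, z4.
apply: (@mulfI _ (m ^+ 2)); first by rewrite expf_neq0.
transitivity ((m * r + m * s) ^+ 2 + m ^+ 2 * (z2 ^+ 2 + z3 ^+ 2 + z4 ^+ 2));
  last by ring.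
have -> : m ^+ 2 * (r * p) = (m * p) * (m * r) by ring.
by rewrite Hp Hr /s /z2 /z3 /z4; ring.
Qed.

Lemma sqr_le_of_centered (j : nat) (y : int) :
  - j%:Z <= y <= j%:Z -> y ^+ 2 <= j%:Z ^+ 2.
Proof. by rewrite !expr2 => /andP [? ?]; nia. Qed.

Lemma sum4sq_descent_step (p j : nat) : prime p -> (0 < j)%N ->
    (2 * j + 1 < p)%N -> sum4sq ((2 * j + 1)%:Z * p%:Z) ->
  exists r : nat, (0 < r < 2 * j + 1)%N /\ sum4sq (r%:Z * p%:Z).
Proof.
move=> p_pr j_gt0 lt_mp [a1 [a2 [a3 [a4 Hp]]]].
have [y1 [k1 [ea1 /sqr_le_of_centered y1b]]] := divz_centered j a1.
have [y2 [k2 [ea2 /sqr_le_of_centered y2b]]] := divz_centered j a2.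
have [y3 [k3 [ea3 /sqr_le_of_centered y3b]]] := divz_centered j a3.
have [y4 [k4 [ea4 /sqr_le_of_centered y4b]]] := divz_centered j a4.
rewrite {}ea1 {}ea2 {}ea3 {}ea4 in Hp.
set m := (2 * j + 1)%:Z in Hp; have m_gt0 : 0 < m by rewrite /m; lia.
have [r Hr] : exists r, m * r = y1 ^+ 2 + y2 ^+ 2 + y3 ^+ 2 + y4 ^+ 2.
  exists (p%:Z - 2 * (y1 * k1 + y2 * k2 + y3 * k3 + y4 * k4)
          - m * (k1 ^+ 2 + k2 ^+ 2 + k3 ^+ 2 + k4 ^+ 2)).
  by move: Hp; rewrite !expr2; lia.
have r_lt_m : r < m.
  by clear Hp; move: Hr y1b y2b y3b y4b; rewrite /m !expr2 => *; nia.
have r_ge0 : 0 <= r by clear Hp; move: Hr; rewrite !expr2; nia.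
have r_gt0 : 0 < r.
  rewrite lt_neqAle r_ge0 andbT; apply/eqP => r0; move: Hr; rewrite -r0 mulr0.
  move=> /esym Hy; have [e1 [e2 [e3 e4]]] : y1 = 0 /\ y2 = 0 /\ y3 = 0 /\ y4 = 0.
    by clear Hp; move: Hy; rewrite !expr2; nia.
  rewrite {}e1 {}e2 {}e3 {}e4 !add0r in Hp.
  have : m * (p%:Z - m * (k1 ^+ 2 + k2 ^+ 2 + k3 ^+ 2 + k4 ^+ 2)) = 0.
    by move: Hp; rewrite !expr2; lia.
  move/eqP; rewrite mulf_eq0 (gt_eqF m_gt0) /= subr_eq0 => /eqP ep.
  have m_dvd_p : (2 * j + 1 %| p)%N.
    set K := _ + _ in ep; have K_ge0 : 0 <= K by rewrite /K !addr_ge0 ?sqr_ge0.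
    move: ep; rewrite -(gez0_abs K_ge0) /m -PoszM => /eqP; rewrite eqz_nat.
    by move=> /eqP ->; apply: dvdn_mulr.
  have m_neq1 : (2 * j + 1 != 1)%N by clear -j_gt0; lia.
  by move: lt_mp; rewrite (prime_nt_dvdP p_pr m_neq1 m_dvd_p) ltnn.
exists `|r|%N; split; first by clear -r_gt0 r_lt_m; lia.
rewrite gtz0_abs //; exact: sum4sq_reduce (lt0r_neq0 m_gt0) Hp Hr.
Qed.

Lemma sum4sq_prime_of_mul p m : prime p -> (0 < m < p)%N ->
  sum4sq (m%:Z * p%:Z) -> sum4sq p%:Z.
Proof.
move=> p_pr; elim/ltn_ind: m => m IH /andP [m_gt0 lt_mp] Hm.
have [m1|m_neq1] := eqVneq m 1%N; first by rewrite m1 mul1r in Hm.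
have em := odd_double_half m.
case: (boolP (odd m)) em => [m_odd|m_even] /= em.
  have [r [r_lt Hr]] := @sum4sq_descent_step p m./2 p_pr ltac:(lia) ltac:(lia)
    ltac:(by have -> : (2 * m./2 + 1)%:Z = m%:Z by lia).
  by apply: (IH r) => //; lia.
apply: (IH m./2); [lia | lia |].
have [a [b [c [d Habcd]]]] := Hm.
apply: (@sum4sq_halve _ a b c d); rewrite -Habcd.
have -> : m%:Z = 2 * (m./2)%:Z by lia.
by ring.
Qed.

Lemma sum4sq_prime p : prime p -> sum4sq p%:Z.
Proof.
move=> p_pr; have [->|p_odd] := even_prime p_pr; first by exists 1, 1, 0, 0.
have [x [y [hx hy dvd]]] := exists_small_sqrD1_dvd p_pr p_odd.
have p_gt1 := prime_gt1 p_pr.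
set m := ((x ^ 2 + y ^ 2 + 1) %/ p)%N; have em : (m * p = x ^ 2 + y ^ 2 + 1)%N.
  exact: divnK.
apply: (@sum4sq_prime_of_mul p m p_pr); last first.
  by exists x%:Z, y%:Z, 1, 0; rewrite -PoszM em; lia.
apply/andP; split; first by move: em; case: (m); lia.
have small : (x ^ 2 + y ^ 2 + 1 < p * p)%N by rewrite !expnS expn0 !muln1; nia.
by rewrite -(ltn_pmul2r (prime_gt0 p_pr)) em.
Qed.

Theorem sum4sq_nat (N : nat) : sum4sq N%:Z.
Proof.
elim/ltn_ind: N => N IH; case: (ltnP 1 N) => [N_gt1|]; last first.
  by case: N IH => [|[|]] // _ _; [exists 0, 0, 0, 0 | exists 1, 0, 0, 0].
rewrite -(divnK (pdiv_dvd N)) PoszM mulrC.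
apply: sum4sqM; first exact/sum4sq_prime/pdiv_prime.
by apply: IH; rewrite ltn_Pdiv ?prime_gt1 ?pdiv_prime //; lia.
Qed.

Lemma in_Gamma0 n : in_Gamma n 0.
Proof. by exists [::]; rewrite big_nil. Qed.

Lemma in_GammaD n x y : in_Gamma n x -> in_Gamma n y -> in_Gamma n (x + y).
Proof.
move=> [s [hs ->]] [t [ht ->]]; exists (s ++ t).
by rewrite all_cat hs ht big_cat.
Qed.

Lemma in_Gamma_sqr n k : n%:Z <= k -> in_Gamma n (k ^+ 2).
Proof. by move=> le_nk; exists [:: k]; rewrite /= le_nk big_seq1. Qed.

Lemma in_Gamma_natmul_sqr n (q : nat) : in_Gamma n (q%:Z * n%:Z ^+ 2).
Proof.
elim: q => [|q IH]; first by rewrite mul0r; apply: in_Gamma0.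
by rewrite intS mulrDl mul1r addrC; apply: in_GammaD => //; apply: in_Gamma_sqr.
Qed.

Lemma in_Gamma_ge0 n m : in_Gamma n m -> 0 <= m.
Proof. by move=> [s [_ ->]]; apply: sumr_ge0 => k _; apply: sqr_ge0. Qed.

Section LargeElements.

Variable n : nat.
Local Notation N := n%:Z.

Lemma in_Gamma_8sqrD x : x ^+ 2 <= N ^+ 2 -> in_Gamma n (8 * N ^+ 2 + 2 * x ^+ 2).
Proof.
move=> le_xN; have [lo hi] : - N <= x /\ x <= N by move: le_xN; rewrite !expr2; nia.
have -> : 8 * N ^+ 2 + 2 * x ^+ 2 = (2 * N + x) ^+ 2 + (2 * N - x) ^+ 2 by ring.
by apply: in_GammaD; apply: in_Gamma_sqr; lia.
Qed.

Lemma in_Gamma_32sqrD r : 0 <= r <= N ^+ 2 -> in_Gamma n (32 * N ^+ 2 + 2 * r).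
Proof.
case/andP=> r_ge0 le_rN; have [a [b [c [d er]]]] := sum4sq_nat `|r|%N.
rewrite gez0_abs // in er.
have sq_le x : x ^+ 2 <= r -> x ^+ 2 <= N ^+ 2 by move/le_trans; apply.
have -> : 32 * N ^+ 2 + 2 * r = (8 * N ^+ 2 + 2 * a ^+ 2) + (8 * N ^+ 2 + 2 * b ^+ 2)
    + (8 * N ^+ 2 + 2 * c ^+ 2) + (8 * N ^+ 2 + 2 * d ^+ 2) by rewrite er; ring.
apply: in_GammaD; [apply: in_GammaD; [apply: in_GammaD|]|];
  apply/in_Gamma_8sqrD/sq_le; rewrite er;
  by move: (sqr_ge0 a) (sqr_ge0 b) (sqr_ge0 c) (sqr_ge0 d); lia.
Qed.

Hypothesis n_gt0 : (0 < n)%N.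

Lemma in_Gamma_32sqrD2 u : 0 <= u -> in_Gamma n (32 * N ^+ 2 + 2 * u).
Proof.
move=> u_ge0; have N2_gt0 : 0 < N ^+ 2 by rewrite exprn_gt0 // ltz_nat.
have eu := divz_eq u (N ^+ 2); have Q_ge0 := divz_ge0 u N2_gt0.
have r_ge0 := modz_ge0 u (lt0r_neq0 N2_gt0); have r_lt := ltz_pmod u N2_gt0.
rewrite u_ge0 in Q_ge0.
have -> : 32 * N ^+ 2 + 2 * u = (2 * `|u %/ N ^+ 2|%Z)%N%:Z * N ^+ 2
    + (32 * N ^+ 2 + 2 * (u %% N ^+ 2)%Z).
  have -> : (2 * `|u %/ N ^+ 2|%Z)%N%:Z = 2 * (u %/ N ^+ 2)%Z by lia.
  by rewrite {1}eu; ring.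
apply: in_GammaD; first exact: in_Gamma_natmul_sqr.
by apply: in_Gamma_32sqrD; rewrite r_ge0 ltW.
Qed.

Lemma in_Gamma_large m : 36 * N ^+ 2 <= m -> in_Gamma n m.
Proof.
move=> le_m; have N_ge1 : 1 <= N by rewrite lez_nat.
have sq_le : (N + 1) ^+ 2 <= 4 * N ^+ 2 by rewrite !expr2; nia.
have [e [u [Ge u_ge0 ->]]] :
    exists e u, [/\ in_Gamma n e, 0 <= u & m = e + (32 * N ^+ 2 + 2 * u)].
  have [/dvdzP [u eu] | odd_m] := boolP (2 %| m - N ^+ 2)%Z.
    exists (N ^+ 2), (u - 16 * N ^+ 2); split; [exact: in_Gamma_sqr | lia | lia].
  have /dvdzP [u eu] : (2 %| m - (N + 1) ^+ 2)%Z.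
    by move: odd_m; rewrite sqrrD1; lia.
  exists ((N + 1) ^+ 2), (u - 16 * N ^+ 2).
  by split; [apply: in_Gamma_sqr; lia | lia | lia].
by apply: in_GammaD => //; apply: in_Gamma_32sqrD2.
Qed.

End LargeElements.

Lemma exists_frobenius_lt n (N : nat) :
    (forall m : int, N%:Z <= m -> in_Gamma n m) ->
  exists f, is_frobenius n f /\ f < N%:Z.
Proof.
elim: N => [|N IH] large.
  exists (-1); split => //; split; first by move/in_Gamma_ge0.
  move=> m m_notin; rewrite leNgt; apply: contra_notN m_notin => lt_m.
  by apply: large; lia.
have [N_in | N_notin] := classic (in_Gamma n N%:Z).
  have [f [f_frob f_lt]] : exists f, is_frobenius n f /\ f < N%:Z.
    apply: IH => m le_Nm; have [->|lt_Nm] := eqVneq m N%:Z; first exact: N_in.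
    by apply: large; lia.
  by exists f; split => //; lia.
exists N%:Z; split; last by lia.
split => // m m_notin; rewrite leNgt; apply: contra_notN m_notin => lt_Nm.
by apply: large; lia.
Qed.

Theorem theorem1 :
  exists C : int, (0 < C)%R /\
    forall n : nat, (0 < n)%N ->
      exists f : int, is_frobenius n f /\ (f <= C * (n%:Z) ^+ 2)%R.
Proof.
exists 36; split => // n n_gt0.
have e36 : (36 * n * n)%N%:Z = 36 * n%:Z ^+ 2 by rewrite !PoszM expr2 mulrA.
have [f [f_frob f_lt]] : exists f, is_frobenius n f /\ f < (36 * n * n)%N%:Z.
  by apply: exists_frobenius_lt => m; rewrite e36; apply: in_Gamma_large.
by exists f; split => //; apply/ltW; rewrite -e36.
Qed.
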